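(* Let $\mathbf p$ be a Nash-routing of a sum-bucket game on a simple graph with $n\ge2$ nodes whose strategy paths are all simple, and let $\mathbf p^*$ be an optimal routing with $\overline C^*=\overline C(\mathbf p^* )$ and $\overline D^*=\overline D(\mathbf p^* )$. Then $\overline C(\mathbf p)\le18\,\overline C^*\,\overline D^*\lg^2 n$.
   Context: A routing game $(\mathbf N,G,\mathcal P)$: players $\{1,\dots,N\}$ ($N\ge1$), a simple graph $G$ with $n$ nodes, and for each player $i$ a nonempty finite set $\mathcal P_i$ of simple paths (each with at least one edge) from $u_i$ to $v_i$; $\mathcal P=\bigcup_i\mathcal P_i$, $L=\max_{p\in\mathcal P}|p|$ (number of edges). A routing is $\mathbf p=[p_1,\dots,p_N]$, $p_i\in\mathcal P_i$. Sum-bucket game: for $k=0,\dots,\lceil\lg L\rceil$ bucket $B_k$ = paths in $\mathcal P$ with length in $[2^k,2^{k+1})$, $B(q)$ = bucket index of $q$; normalized length $\overline D_q=2^{B(q)+1}-1$; $\overline C_{e,q}(\mathbf p)$ = number of players $j$ with $e\in p_j$ and $B(p_j)=B(q)$; $\overline C_q(\mathbf p)=\max_{e\in q}\overline C_{e,q}(\mathbf p)$; $\overline C_i=\overline C_{p_i}$, $\overline D_i=\overline D_{p_i}$; player cost $pc_i=\overline C_i+\overline D_i$; $\overline C(\mathbf p)=\max_i\overline C_i$, $\overline D(\mathbf p)=\max_i\overline D_i$; social cost $SC=\overline C+\overline D$. A Nash-routing: no player can strictly lower its cost by unilaterally changing its path within $\mathcal P_i$; an optimal routing minimizes $SC$.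 $\lg=\log_2$. *)

From mathcomp Require Import all_boot.
From Stdlib Require Import Reals.

Set Implicit Arguments.
Unset Strict Implicit.
Unset Printing Implicit Defensive.

Definition simple_graph (n : nat) (G : rel 'I_n) : Prop :=
  symmetric G /\ irreflexive G.

Definition simple_path (n : nat) (G : rel 'I_n) (u v : 'I_n) (q : seq 'I_n) : bool :=
  match q with
  | x :: s => [&& x == u, s != [::], path G x s, last x s == v & uniq q]
  | [::] => false
  end.

Definition plen (n : nat) (q : seq 'I_n) : nat := (size q).-1.

Definition pedges (n : nat) (q : seq 'I_n) : seq {set 'I_n} :=
  [seq [set x.1; x.2] | x <- zip q (behead q)].

Definition bucket (n : nat) (q : seq 'I_n) : nat := trunc_log 2 (plen q).

Definition Dbar (n : nat) (q : seq 'I_n) : nat := expn 2 (bucket q).+1 - 1.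

Definition routing (n N : nat) := 'I_N -> seq 'I_n.

Definition is_routing (n N : nat) (P : 'I_N -> seq (seq 'I_n)) (r : routing n N) : Prop :=
  forall i, r i \in P i.

Definition Cbar_e (n N : nat) (r : routing n N) (e : {set 'I_n}) (q : seq 'I_n) : nat :=
  #|[set j : 'I_N | (e \in pedges (r j)) && (bucket (r j) == bucket q)]|.

Definition Cbar_q (n N : nat) (r : routing n N) (q : seq 'I_n) : nat :=
  \max_(e <- pedges q) Cbar_e r e q.

Definition Cbar_i (n N : nat) (r : routing n N) (i : 'I_N) : nat := Cbar_q r (r i).
Definition Dbar_i (n N : nat) (r : routing n N) (i : 'I_N) : nat := Dbar (r i).
Definition pcost (n N : nat) (r : routing n N) (i : 'I_N) : nat := Cbar_i r i + Dbar_i r i.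

Definition Cbar (n N : nat) (r : routing n N) : nat := \max_(i < N) Cbar_i r i.
Definition DbarR (n N : nat) (r : routing n N) : nat := \max_(i < N) Dbar_i r i.
Definition SC (n N : nat) (r : routing n N) : nat := Cbar r + DbarR r.

Definition deviate (n N : nat) (r : routing n N) (i : 'I_N) (q : seq 'I_n) : routing n N :=
  fun j => if j == i then q else r j.

Definition nash (n N : nat) (P : 'I_N -> seq (seq 'I_n)) (r : routing n N) : Prop :=
  is_routing P r /\
  forall (i : 'I_N) (q : seq 'I_n), q \in P i -> pcost r i <= pcost (deviate r i q) i.

Definition optimal (n N : nat) (P : 'I_N -> seq (seq 'I_n)) (r : routing n N) : Prop :=
  is_routing P r /\ forall r' : routing n N, is_routing P r' -> SC r <= SC r'.

Definition routing_game (n N : nat) (G : rel 'I_n) (u v : 'I_N -> 'I_n)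
  (P : 'I_N -> seq (seq 'I_n)) : Prop :=
  simple_graph G /\
  forall i : 'I_N, P i != [::] /\ forall q, q \in P i -> simple_path G (u i) (v i) q.

Definition lg (x : nat) : R := (ln (INR x) / ln 2)%R.

From mathcomp Require Import all_boot zify.
From Stdlib Require Import Reals Lra.
(* Reals rebinds [_ ^ _] in nat_scope to Nat.pow; restore ssrnat's expn. *)
Import ssrnat.

Set Implicit Arguments.
Unset Strict Implicit.
Unset Printing Implicit Defensive.

(* Write C = Cbar p, c = Cbar pstar and D = DbarR pstar.  A slot is a pair
   (e, k) of an edge e and a bucket index k < n; its load in a routing is the
   number of players whose path uses e and lies in bucket k, so that Cbar_i is
   the largest load of a slot used by player i.  Let H(y) be the set of slots of
   load at least y; there are at most n^3 slots, and H(C) is nonempty.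

   The Nash inequality, comparing the cost of player i with the cost of
   deviating to pstar_i, yields two double-counting estimates for the players
   A(y) with Cbar_i >= y:
   - every such player has path length at most C + 1 + D - y, and every slot
     of H(y) is used by at least y of them, so y |H(y)| <= (C + 1 + D - y) |A(y)|;
   - pstar_i uses a slot of H(y - D), and each slot is used by at most c paths
     of pstar, so |A(y)| <= c |H(y - D)|.
   Hence y |H(y)| <= c (C + 1 + D - y) |H(y - D)|: as long as y = C - kD is at
   least 2c(C + 1 + D - y) the size of H doubles at each step, which can happen
   at most lg(n^3) times.  This gives C <= c D (3 lg(n^3) + 4) in naturals, and
   the real inequality C <= 18 c D lg^2 n follows. *)

Lemma double_count (I J : finType) (A : {set I}) (B : {set J}) (R : I -> J -> bool) :
  \sum_(i in A) #|[set j in B | R i j]| = \sum_(j in B) #|[set i in A | R i j]|.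
Proof.
have card_sum (K : finType) (X : {set K}) (f : pred K) :
    #|[set k in X | f k]| = \sum_(k in X) f k.
  rewrite -sum1_card (eq_bigl (fun k => (k \in X) && f k)) => [|k]; last by rewrite inE.
  by rewrite big_mkcondr /=; apply: eq_bigr => k _; case: (f k).
under eq_bigr do rewrite card_sum.
by rewrite exchange_big; apply: eq_bigr => j _; rewrite card_sum.
Qed.

Lemma bigmax_seq_attained (T : eqType) (s : seq T) (F : T -> nat) :
  s != [::] -> exists2 x, x \in s & \max_(y <- s) F y = F x.
Proof.
elim: s => [//|a s IH] _; rewrite big_cons.
have [-> | /IH [x xs ->]] := eqVneq s [::].
  by exists a; rewrite ?big_nil ?maxn0 ?mem_head.
have [le_ax | lt_xa] := leqP (F a) (F x).
  by exists x; rewrite ?inE ?xs ?orbT //; apply/maxn_idPr.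
by exists a; rewrite ?mem_head //; apply/maxn_idPl/ltnW.
Qed.

Lemma iterate_doubling (g : nat -> nat) (K : nat) :
  (forall k, k < K -> 2 * g k <= g k.+1) -> 2 ^ K * g 0 <= g K.
Proof.
elim: K => [|K IH] step; first by rewrite mul1n.
rewrite expnSr mulnAC; apply: leq_trans (step K (ltnSn K)).
by rewrite mulnC leq_mul2l IH // => k /ltnW; apply: step.
Qed.

Lemma doubling_step (a b c L y : nat) :
  0 < c -> 0 < L -> 2 * c * L <= y -> y * a <= b * c * L -> 2 * a <= b.
Proof.
move=> c_gt0 L_gt0 yL ya; rewrite -(@leq_pmul2r (c * L)) ?muln_gt0 ?c_gt0 //.
rewrite [in X in _ <= X]mulnA; apply: leq_trans ya.
by rewrite mulnAC mulnA leq_mul2r yL orbT.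
Qed.

(* If C > c D (3 t + 4) and k <= t, the point y = C - k D satisfies
   y >= 2 c (C + 1 + D - y) = 2 c (1 + D + k D), so a doubling step applies. *)
Lemma doubling_room (C c D t k : nat) : 0 < c -> 0 < D -> k <= t ->
  c * D * (3 * t + 4) < C -> 2 * c * (1 + D + k * D) <= C - k * D.
Proof.
move=> c_gt0 D_gt0 le_kt C_big.
have kD_le : k * D <= c * D * t.
  by rewrite mulnAC leq_mul2r (leq_trans le_kt) ?leq_pmull ?orbT.
have cDk_le : c * D * k <= c * D * t by rewrite leq_mul2l le_kt orbT.
have c_le : c <= c * D by rewrite leq_pmulr.
have -> : 2 * c * (1 + D + k * D) = 2 * c + 2 * (c * D) + 2 * (c * D * k) by nia.
have {}C_big : 3 * (c * D * t) + 4 * (c * D) < C.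
  by move: C_big; rewrite mulnDr -!mulnA; lia.
(* lia only needs the products as opaque atoms *)
move: C_big kD_le cDk_le c_le; move: (c * D * t) (c * D * k) (c * D) (k * D) => x y z w; lia.
Qed.

(* The counting core of the theorem: a function h bounded by M < 2^(t+1),
   positive at C and satisfying y h(y) <= c (C + 1 + D - y) h(y - D) would
   double along C, C - D, ..., C - (t+1) D unless C <= c D (3 t + 4). *)
Lemma doubling_bound (h : nat -> nat) (C c D M t : nat) :
  0 < c -> 0 < D ->
  (forall y, y * h y <= h (y - D) * c * (C + 1 + D - y)) ->
  0 < h C -> (forall y, h y <= M) -> M < 2 ^ t.+1 ->
  C <= c * D * (3 * t + 4).
Proof.
move=> c_gt0 D_gt0 recursion hC_gt0 h_le_M M_lt; rewrite leqNgt; apply/negP => C_big.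
have step k : k < t.+1 -> 2 * h (C - k * D) <= h (C - k.+1 * D).
  move=> le_kt; have room := doubling_room c_gt0 D_gt0 (le_kt : k <= t) C_big.
  have kD_lt : k * D < C.
    rewrite -subn_gt0; apply: leq_trans room.
    by rewrite !muln_gt0 c_gt0 addn_gt0.
  apply: (doubling_step c_gt0 _ room) => //.
  by have := recursion (C - k * D); rewrite mulSnr subnDA; congr (_ <= _ * _); lia.
have := @iterate_doubling (fun k => h (C - k * D)) t.+1 step; rewrite mul0n subn0.
have := h_le_M (C - t.+1 * D); have := leq_pmulr (2 ^ t.+1) hC_gt0; lia.
Qed.

Definition slot (n : nat) := ({set 'I_n} * 'I_n)%type.

Definition uses (n : nat) (q : seq 'I_n) (s : slot n) : bool :=
  (s.1 \in pedges q) && (bucket q == s.2).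

Definition load (n N : nat) (r : routing n N) (s : slot n) : nat :=
  #|[set j | uses (r j) s]|.

Definition edge_slots (n : nat) : {set slot n} :=
  [set ([set x.1.1; x.1.2], x.2) | x : 'I_n * 'I_n * 'I_n].

Definition heavy (n N : nat) (r : routing n N) (y : nat) : {set slot n} :=
  [set s in edge_slots n | y <= load r s].

Definition congested (n N : nat) (r : routing n N) (y : nat) : {set 'I_N} :=
  [set j | y <= Cbar_i r j].

Section Paths.
Variable n : nat.
Implicit Types (q : seq 'I_n) (s : slot n).

Lemma size_pedges q : size (pedges q) = plen q.
Proof. by rewrite size_map size_zip size_behead /plen; apply/minn_idPr/leq_pred. Qed.

Lemma plen_le_Dbar q : plen q <= Dbar q.
Proof. by have := trunc_log_ltn (plen q) (isT : 1 < 2); rewrite /Dbar /bucket; lia. Qed.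

Lemma Dbar_gt0 q : 0 < Dbar q.
Proof. by rewrite /Dbar subn_gt0 -{1}(expn0 2) ltn_exp2l. Qed.

(* A simple path on n nodes has fewer than n edges, so its bucket index is < n. *)
Lemma bucket_lt q : 0 < n -> uniq q -> bucket q < n.
Proof.
move=> n_gt0 uq; have size_le : size q <= n.
  by rewrite -(card_uniqP uq); apply: leq_trans (max_card _) _; rewrite card_ord.
rewrite /bucket; have [-> | plen_gt0] := posnP (plen q); first by rewrite trunc_log0.
have := trunc_logP (isT : 1 < 2) plen_gt0; have := ltn_expl (trunc_log 2 (plen q)) (isT : 1 < 2).
by rewrite /plen; lia.
Qed.

Lemma simple_path_props (G : rel 'I_n) (a b : 'I_n) q :
  simple_path G a b q -> uniq q /\ pedges q != [::].
Proof. by case: q => [//|x s] /and5P[_ s_ne _ _ ->]; split=> //; case: s s_ne. Qed.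

Lemma uses_edge_slot q s : uses q s -> s \in edge_slots n.
Proof.
rewrite /edge_slots; case: s => e k /andP[/mapP[[x y] _ /= ->] _].
by apply/imsetP; exists ((x, y), k) => /=.
Qed.

Lemma edge_slot_exists q e : 0 < n -> uniq q -> e \in pedges q ->
  exists2 s : slot n, uses q s & s.1 = e.
Proof.
by move=> n_gt0 uq e_in; exists (e, Ordinal (bucket_lt n_gt0 uq)); rewrite // /uses e_in eqxx.
Qed.

Lemma card_edge_slots : #|edge_slots n| <= n ^ 3.
Proof.
apply: leq_trans (leq_imset_card _ _) _.
by rewrite !card_prod !card_ord !expnS expn0 muln1 mulnA.
Qed.

Lemma card_uses q : #|[set s | uses q s]| <= plen q.
Proof.
rewrite -size_pedges -(@card_in_imset _ _ fst); last first.
  move=> [e1 k1] [e2 k2]; rewrite !inE /uses /= => /andP[_ /eqP k1E] /andP[_ /eqP k2E] ->.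
  by congr (_, _); apply: val_inj => /=; rewrite -k1E -k2E.
apply: leq_trans (card_size (pedges q)); apply: subset_leq_card.
by apply/subsetP => e /imsetP[s]; rewrite inE => /andP[s1_in _] ->.
Qed.

End Paths.

Section Congestion.
Variables n N : nat.
Implicit Types (r : routing n N) (q : seq 'I_n) (s : slot n) (e : {set 'I_n}).

Lemma load_Cbar_e r q s : uses q s -> load r s = Cbar_e r s.1 q.
Proof.
case/andP=> _ /eqP bucket_q; apply: eq_card => j.
by rewrite !inE /uses bucket_q.
Qed.

Lemma Cbar_e_le_Cbar_i r j e : e \in pedges (r j) -> Cbar_e r e (r j) <= Cbar_i r j.
Proof. by move=> e_in; apply: (@leq_bigmax_seq _ _ xpredT (fun e => Cbar_e r e (r j)) e). Qed.

Lemma Cbar_i_le_Cbar r j : Cbar_i r j <= Cbar r.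
Proof. exact: (@leq_bigmax _ (fun j => Cbar_i r j)). Qed.

(* Every edge congestion is witnessed by a player, hence bounded by Cbar. *)
Lemma Cbar_e_le_Cbar r e q : Cbar_e r e q <= Cbar r.
Proof.
have [-> // | ] := posnP (Cbar_e r e q); rewrite card_gt0 => /set0Pn[j].
rewrite inE => /andP[e_in /eqP bucket_j].
have -> : Cbar_e r e q = Cbar_e r e (r j) by apply: eq_card => k; rewrite !inE bucket_j.
exact: leq_trans (Cbar_e_le_Cbar_i e_in) (Cbar_i_le_Cbar r j).
Qed.

Lemma Cbar_q_le_Cbar r q : Cbar_q r q <= Cbar r.
Proof. by apply/bigmax_leqP_seq => e _ _; apply: Cbar_e_le_Cbar. Qed.

Lemma load_le_Cbar_i r j s : uses (r j) s -> load r s <= Cbar_i r j.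
Proof. by move=> uses_js; rewrite (load_Cbar_e r uses_js) Cbar_e_le_Cbar_i //; case/andP: uses_js. Qed.

Lemma load_le_Cbar r s : load r s <= Cbar r.
Proof.
have [-> // | ] := posnP (load r s); rewrite card_gt0 => /set0Pn[j].
by rewrite inE => /load_le_Cbar_i/leq_trans; apply; apply: Cbar_i_le_Cbar.
Qed.

Lemma Cbar_q_attained r q : 0 < n -> uniq q -> pedges q != [::] ->
  exists2 s, uses q s & load r s = Cbar_q r q.
Proof.
move=> n_gt0 uq /(bigmax_seq_attained (fun e => Cbar_e r e q))[e e_in max_e].
have [s uses_s s1_e] := edge_slot_exists n_gt0 uq e_in.
by exists s; rewrite // /Cbar_q max_e -s1_e (load_Cbar_e r uses_s).
Qed.

Lemma Cbar_e_deviate r i q e q' : Cbar_e (deviate r i q) e q' <= (Cbar_e r e q').+1.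
Proof.
rewrite /Cbar_e -add1n -(cards1 i); apply: leq_trans (leq_card_setU _ _).
by apply: subset_leq_card; apply/subsetP => j; rewrite !inE /deviate; case: eqP.
Qed.

Lemma Cbar_q_deviate r i q q' : Cbar_q (deviate r i q) q' <= (Cbar_q r q').+1.
Proof.
apply/bigmax_leqP_seq => e e_in _; apply: leq_trans (Cbar_e_deviate r i q e q') _.
by rewrite ltnS; apply: (@leq_bigmax_seq _ _ xpredT (fun e => Cbar_e r e q') e).
Qed.

Lemma Dbar_le_DbarR r i : Dbar (r i) <= DbarR r.
Proof. exact: (@leq_bigmax _ (fun i => Dbar_i r i)). Qed.

Lemma card_heavy r y : #|heavy r y| <= n ^ 3.
Proof.
apply: leq_trans (card_edge_slots n); apply: subset_leq_card.
by apply/subsetP => s; rewrite inE => /andP[].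
Qed.

(* First double counting: each slot of H(y) is used by at least y players, all
   in A(y), and each player uses at most |p_j| slots. *)
Lemma heavy_count r y : y * #|heavy r y| <= \sum_(j in congested r y) plen (r j).
Proof.
have users_heavy s : s \in heavy r y ->
    y <= #|[set j in congested r y | uses (r j) s]|.
  rewrite inE => /andP[_ y_le]; apply: (leq_trans y_le); apply: subset_leq_card.
  apply/subsetP => j; rewrite !inE => uses_js.
  by rewrite uses_js andbT (leq_trans y_le) ?load_le_Cbar_i.
rewrite mulnC -sum_nat_const.
apply: (leq_trans (leq_sum _ users_heavy)); rewrite double_count; apply: leq_sum => j _.
apply: leq_trans (card_uses (r j)); apply: subset_leq_card.
by apply/subsetP => s; rewrite !inE => /andP[].
Qed.

Lemma DbarR_gt0 r : 0 < N -> 0 < DbarR r.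
Proof. by move=> N_gt0; apply: leq_trans (Dbar_le_DbarR r (Ordinal N_gt0)); apply: Dbar_gt0. Qed.

Lemma Cbar_gt0 r : 0 < N -> (forall i, pedges (r i) != [::]) -> 0 < Cbar r.
Proof.
move=> N_gt0 has_edges; pose i0 := Ordinal N_gt0.
have [e e_in] : exists e, e \in pedges (r i0).
  by case: (pedges (r i0)) (has_edges i0) => [//|e s] _; exists e; apply: mem_head.
apply: leq_trans (leq_trans (Cbar_e_le_Cbar_i e_in) (Cbar_i_le_Cbar r i0)).
by rewrite card_gt0; apply/set0Pn; exists i0; rewrite inE e_in eqxx.
Qed.

(* H(Cbar r) contains the slot realizing the maximal congestion. *)
Lemma heavy_top_nonempty r : 0 < n -> 0 < N ->
  (forall i, uniq (r i) /\ pedges (r i) != [::]) -> 0 < #|heavy r (Cbar r)|.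
Proof.
move=> n_gt0 N_gt0 simple_r.
have [j0 Cbar_j0] := eq_bigmax (fun j => Cbar_i r j) (ltac:(by rewrite card_ord) : 0 < #|'I_N|).
have [uq has_edges] := simple_r j0.
have [s uses_s load_s] := Cbar_q_attained r n_gt0 uq has_edges.
rewrite card_gt0; apply/set0Pn; exists s.
rewrite inE (uses_edge_slot uses_s) load_s /Cbar Cbar_j0; exact: leqnn.
Qed.

End Congestion.

Section NashRouting.
Variables (n N : nat) (P : 'I_N -> seq (seq 'I_n)) (p pstar : routing n N).
Hypothesis p_nash : nash P p.
Hypothesis pstar_routing : is_routing P pstar.
Hypothesis n_gt0 : 0 < n.
Hypothesis pstar_simple : forall i, uniq (pstar i) /\ pedges (pstar i) != [::].

Lemma nash_deviation_bound i q : q \in P i ->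
  Cbar_i p i + Dbar_i p i <= (Cbar_q p q).+1 + Dbar q.
Proof.
move=> q_in; apply: leq_trans (p_nash.2 i q q_in) _.
by rewrite /pcost /Cbar_i /Dbar_i /deviate eqxx leq_add2r; apply: Cbar_q_deviate.
Qed.

Lemma congested_plen y j : j \in congested p y ->
  plen (p j) <= Cbar p + 1 + DbarR pstar - y.
Proof.
rewrite inE => y_le; have := nash_deviation_bound (pstar_routing j).
have := Cbar_q_le_Cbar p (pstar j); have := Dbar_le_DbarR pstar j.
by have := plen_le_Dbar (p j); rewrite /Dbar_i; lia.
Qed.

Lemma congested_heavy_slot y i : i \in congested p y ->
  exists2 s, uses (pstar i) s & s \in heavy p (y - DbarR pstar).
Proof.
rewrite inE => y_le; have [uq has_edges] := pstar_simple i.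
have [s uses_s load_s] := Cbar_q_attained p n_gt0 uq has_edges.
exists s; rewrite // inE (uses_edge_slot uses_s) load_s /=.
have := nash_deviation_bound (pstar_routing i); have := Dbar_le_DbarR pstar i.
by have := Dbar_gt0 (p i); rewrite /Dbar_i; lia.
Qed.

Lemma card_congested y : #|congested p y| <= #|heavy p (y - DbarR pstar)| * Cbar pstar.
Proof.
have one_slot i : i \in congested p y ->
    1 <= #|[set s in heavy p (y - DbarR pstar) | uses (pstar i) s]|.
  move=> /congested_heavy_slot[s uses_s heavy_s].
  by rewrite card_gt0; apply/set0Pn; exists s; rewrite inE heavy_s.
rewrite -sum1_card; apply: (leq_trans (leq_sum _ one_slot)).
rewrite double_count -sum_nat_const; apply: leq_sum => s _.
apply: leq_trans (load_le_Cbar pstar s); apply: subset_leq_card.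
by apply/subsetP => i; rewrite !inE => /andP[].
Qed.

Lemma heavy_recursion y : y * #|heavy p y| <=
  #|heavy p (y - DbarR pstar)| * Cbar pstar * (Cbar p + 1 + DbarR pstar - y).
Proof.
apply: leq_trans (heavy_count p y) _.
apply: leq_trans (leq_sum _ (@congested_plen y)) _.
by rewrite sum_nat_const leq_mul2r card_congested orbT.
Qed.

End NashRouting.

Lemma INR_expn (a b : nat) : INR (a ^ b) = (INR a ^ b)%R.
Proof. by elim: b => [|b IH] //; rewrite expnS -multE mult_INR IH. Qed.

(* The logarithm is nondecreasing (Stdlib only states strict monotonicity). *)
Lemma ln_nondecreasing (x y : R) : (0 < x)%R -> (x <= y)%R -> (ln x <= ln y)%R.
Proof.
move=> x_gt0 /Rle_lt_or_eq_dec[x_lt_y | ->]; last exact: Rle_refl.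
by apply: Rlt_le; apply: ln_increasing.
Qed.

(* 2^t <= n^3 gives t <= 3 lg n, and 3 t + 4 <= 18 lg^2 n as lg n >= 1. *)
Lemma log_factor_bound (n t : nat) : 2 <= n -> 2 ^ t <= n ^ 3 ->
  (INR (3 * t + 4) <= 18 * lg n ^ 2)%R.
Proof.
have INR2 : INR 2 = 2%R by rewrite /=; lra.
move=> n_ge2 /leP/le_INR; rewrite !INR_expn INR2 => pow_le.
have ln2_gt0 : (0 < ln 2)%R by have := ln_lt_2; lra.
have n_ge2R : (2 <= INR n)%R by rewrite -INR2; apply/le_INR/leP.
have ln_n : (ln 2 <= ln (INR n))%R by apply: ln_nondecreasing; lra.
have t_ln2 : (INR t * ln 2 <= 3 * ln (INR n))%R.
  have := ln_nondecreasing (pow_lt 2 t ltac:(lra)) pow_le.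
  by rewrite !ln_pow /=; lra.
have lg_ln : (lg n * ln 2 = ln (INR n))%R by rewrite /lg; field; lra.
have lg_ge1 : (1 <= lg n)%R by apply: (Rmult_le_reg_r (ln 2)); lra.
have t_le : (INR t <= 3 * lg n)%R by apply: (Rmult_le_reg_r (ln 2)); lra.
rewrite plus_INR mult_INR /=; nra.
Qed.

(* The theorem keeps all its binders explicit, as in its statement. *)
Unset Implicit Arguments.

Theorem mainTheorem14 (n N : nat) (hn : 2 <= n) (hN : 1 <= N)
  (G : rel 'I_n) (u v : 'I_N -> 'I_n) (P : 'I_N -> seq (seq 'I_n))
  (hgame : routing_game G u v P)
  (p pstar : routing n N) (hp : nash P p) (hopt : optimal P pstar) :
  (INR (Cbar p) <= 18 * INR (Cbar pstar) * INR (DbarR pstar) * (lg n) ^ 2)%R.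
Proof.
have n_gt0 : 0 < n by apply: ltnW.
have simple_routing r : is_routing P r -> forall i, uniq (r i) /\ pedges (r i) != [::].
  by move=> r_in i; have [_ /(_ _ (r_in i))] := hgame.2 i; apply: simple_path_props.
have [pstar_routing _] := hopt.
have pstar_simple := simple_routing _ pstar_routing.
pose t := trunc_log 2 (n ^ 3).
have C_le : Cbar p <= Cbar pstar * DbarR pstar * (3 * t + 4).
  apply: (doubling_bound (h := fun y => #|heavy p y|) (M := n ^ 3)).
  - exact: Cbar_gt0 hN (fun i => (pstar_simple i).2).
  - exact: DbarR_gt0 hN.
  - exact: heavy_recursion hp pstar_routing n_gt0 pstar_simple.
  - exact: heavy_top_nonempty n_gt0 hN (simple_routing _ hp.1).
  - exact: card_heavy.
  - exact: trunc_log_ltn.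
have log_bound : (INR (3 * t + 4) <= 18 * lg n ^ 2)%R.
  by apply: log_factor_bound hn (trunc_logP _ _); rewrite ?expn_gt0 ?n_gt0.
have cD_ge0 : (0 <= INR (Cbar pstar) * INR (DbarR pstar))%R.
  by apply: Rmult_le_pos; apply: pos_INR.
apply: Rle_trans (le_INR _ _ (elimT leP C_le)) _; rewrite !mult_INR.
by have := Rmult_le_compat_l _ _ _ cD_ge0 log_bound; lra.
Qed.
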